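(* Let $X$ be a scalable monoid over a ring $R$. If $X$ is equipped with a dense closed set $U$ of unit elements, then $X$ is distributive: for all orbitoids $\mathsf{A},\mathsf{B}\in X/{\sim}$, all $x,y\in\mathsf{A}$ and all $z\in\mathsf{B}$, $(x+y)z=xz+yz$ and $z(x+y)=zx+zy$.
   Context: A scalable monoid over a (unital, associative) ring $R$ is a monoid $X$ (identity $1_X$, product written $xy$) together with a map $R\times X\to X$, $(\alpha,x)\mapsto\alpha\cdot x$, such that $1\cdot x=x$, $\alpha\cdot(\beta\cdot x)=\alpha\beta\cdot x$ and $\alpha\cdot(xy)=(\alpha\cdot x)y=x(\alpha\cdot y)$. On $X$, $x\sim y$ iff $\alpha\cdot x=\beta\cdot y$ for some $\alpha,\beta\in R$; its classes are orbitoids, $[x]$ is the orbitoid of $x$, and $X/{\sim}$ is the set of orbitoids. A unit element for an orbitoid $\mathsf{C}$ is some $u\in\mathsf{C}$ such that every $x\in\mathsf{C}$ equals $\lambda\cdot u$ for some $\lambda\in R$ and $\lambda\cdot u=\lambda'\cdot u$ implies $\lambda=\lambda'$; a unit element of $X$ means a unit element for its own orbitoid. A set $U\subseteq X$ is dense if for every $x\in X$ there is $u\in U$ with $u\sim x$, and closed if $u,v\in U$ implies $uv\in U$. For $x,y$ in an orbitoid with unit element $u$, $x=\rho\cdot u$, $y=\sigma\cdot u$, the sum is $x+y:=(\rho+\sigma)\cdot u$ (independent of the choice of $u$). *)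

From mathcomp Require Import all_boot all_algebra.
Set Implicit Arguments. Unset Strict Implicit. Unset Printing Implicit Defensive.
Import GRing.Theory.
Local Open Scope ring_scope.

Definition scalable_monoid (R : pzRingType) (X : Type)
  (mul : X -> X -> X) (one : X) (act : R -> X -> X) : Prop :=
  (forall x y z, mul x (mul y z) = mul (mul x y) z) /\
  (forall x, mul one x = x) /\
  (forall x, mul x one = x) /\
  (forall x, act 1 x = x) /\
  (forall a b x, act a (act b x) = act (a * b) x) /\
  (forall a x y, act a (mul x y) = mul (act a x) y) /\
  (forall a x y, act a (mul x y) = mul x (act a y)).

Definition sim (R : pzRingType) (X : Type) (act : R -> X -> X) (x y : X) : Prop :=
  exists a b : R, act a x = act b y.

Definition unit_element (R : pzRingType) (X : Type) (act : R -> X -> X) (u : X) : Prop :=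
  (forall x, sim act x u -> exists l : R, x = act l u)
  /\ (forall l l' : R, act l u = act l' u -> l = l').

Definition dense_set (R : pzRingType) (X : Type) (act : R -> X -> X) (U : X -> Prop) : Prop :=
  forall x, exists u, U u /\ sim act u x.

Definition closed_set (X : Type) (mul : X -> X -> X) (U : X -> Prop) : Prop :=
  forall u v, U u -> U v -> U (mul u v).

Definition is_sum (R : pzRingType) (X : Type) (act : R -> X -> X) (x y s : X) : Prop :=
  exists (u : X) (rho sigma : R),
    [/\ unit_element act u, x = act rho u, y = act sigma u & s = act (rho + sigma) u].

From mathcomp Require Import all_boot all_algebra.

(* By density every element is a scalar multiple of some u in U, and the
   scaling axioms give (rho.u)(kappa.t) = (rho kappa).(ut).  Since U is closed,
   ut is again a unit element, so both sides of the distributive law are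
   computed relative to the single unit element ut, where they reduce to
   distributivity in R. *)

Set Implicit Arguments.
Unset Strict Implicit.
Unset Printing Implicit Defensive.

Import GRing.Theory.
Local Open Scope ring_scope.

Section ScalableMonoidSums.

Variables (R : pzRingType) (X : Type) (mul : X -> X -> X) (act : R -> X -> X).
Variable U : X -> Prop.

Hypothesis actA : forall a b x, act a (act b x) = act (a * b) x.
Hypothesis actMl : forall a x y, act a (mul x y) = mul (act a x) y.
Hypothesis actMr : forall a x y, act a (mul x y) = mul x (act a y).
Hypothesis U_unit : forall {u}, U u -> unit_element act u.
Hypothesis U_dense : dense_set act U.

Lemma mul_act a b x y : mul (act a x) (act b y) = act (a * b) (mul x y).
Proof. by rewrite -actMl -actMr actA. Qed.

Lemma is_sum_act u rho sigma :
  unit_element act u -> is_sum act (act rho u) (act sigma u) (act (rho + sigma) u).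
Proof. by move=> uU; exists u, rho, sigma. Qed.

Lemma is_sum_mulr u t rho sigma kappa :
  unit_element act (mul u t) ->
  is_sum act (mul (act rho u) (act kappa t)) (mul (act sigma u) (act kappa t))
             (mul (act (rho + sigma) u) (act kappa t)).
Proof. by rewrite !mul_act mulrDl; apply: is_sum_act. Qed.

Lemma is_sum_mull u t rho sigma kappa :
  unit_element act (mul t u) ->
  is_sum act (mul (act kappa t) (act rho u)) (mul (act kappa t) (act sigma u))
             (mul (act kappa t) (act (rho + sigma) u)).
Proof. by rewrite !mul_act mulrDr; apply: is_sum_act. Qed.

Lemma dense_act_decomp x : exists u l, U u /\ x = act l u.
Proof.
have [u [Uu [a [b e]]]] := U_dense x.
have [l ->] := (U_unit Uu).1 x (ex_intro _ b (ex_intro _ a (esym e))).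
by exists u, l.
Qed.

Lemma sim_act_unit u r y :
  unit_element act u -> sim act (act r u) y -> exists l, y = act l u.
Proof. by move=> [uP _] [a [b e]]; apply: uP; exists b, (a * r); rewrite -e actA. Qed.

Lemma is_sum_exists x y : sim act x y -> exists s, is_sum act x y s.
Proof.
have [u [r [Uu ->]]] := dense_act_decomp x.
move=> /(sim_act_unit (U_unit Uu)) [l ->].
by exists (act (r + l) u); apply/is_sum_act/U_unit.
Qed.

Lemma is_sum_dense_base x y s :
  is_sum act x y s ->
  exists u rho sigma, [/\ U u, x = act rho u, y = act sigma u & s = act (rho + sigma) u].
Proof.
move=> [v [rho [sigma [_ -> -> ->]]]].
have [u [l [Uu ->]]] := dense_act_decomp v.
by exists u, (rho * l), (sigma * l); rewrite !actA mulrDl.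
Qed.

End ScalableMonoidSums.

Theorem proposition2p39 (R : pzRingType) (X : Type)
  (mul : X -> X -> X) (one : X) (act : R -> X -> X) (U : X -> Prop) :
  scalable_monoid mul one act ->
  (forall u, U u -> unit_element act u) ->
  dense_set act U -> closed_set mul U ->
  forall x y z : X, sim act x y ->
    (exists s, is_sum act x y s) /\
    (forall s, is_sum act x y s ->
       is_sum act (mul x z) (mul y z) (mul s z) /\
       is_sum act (mul z x) (mul z y) (mul z s)).
Proof.
move=> [_ [_ [_ [_ [actA [actMl actMr]]]]]] U_unit U_dense U_closed x y z xy.
split; first exact: (is_sum_exists actA U_unit U_dense xy).
move=> s /(is_sum_dense_base actA U_unit U_dense) [u [rho [sigma [Uu -> -> ->]]]].
have [t [kappa [Ut ->]]] := dense_act_decomp U_unit U_dense z.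
split.
- by apply: is_sum_mulr => //; apply/U_unit/U_closed.
- by apply: is_sum_mull => //; apply/U_unit/U_closed.
Qed.
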